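(* Let $((G_n)_{n\in\mathbb{N}},(\rho_n)_{n\in\mathbb{N}},(\kappa_k^n)_{k\le n})$ be a diverse $d$-ary cloning system, and let $n_0\in\mathbb{N}$ be such that $\bigcap_{k=1}^n\mathrm{Im}\,\kappa_k^n=\{1\}$ for all $n\ge n_0$. Let $x\in\mathscr{T}_d(G_* )$. If $x^{-1}[T,U]x\in F_d$ for all $d$-ary trees $T,U$ having the same number of leaves, that number being at least $n_0$, then $x\in F_d$.
   Context: Fix an integer $d\ge 2$. A $d$-ary tree is a finite rooted tree in which each non-leaf vertex has exactly $d$ ordered children; its leaves are numbered $1,\dots,n$ from left to right, and $n(T)$ is the number of leaves. For $1\le k\le n(T)$, $T_k$ denotes the tree obtained from $T$ by attaching a $d$-ary caret to the $k$-th leaf. Standard cloning maps: for $\sigma\in S_n$, $1\le k\le n$, partition $\{1,\dots,n+d-1\}$ into consecutive blocks $B^{(k)}_j=\{j\}$ ($j<k$), $B^{(k)}_k=\{k,\dots,k+d-1\}$, $B^{(k)}_j=\{j+d-1\}$ ($j>k$); $(\sigma)\varsigma_k^n\in S_{n+d-1}$ maps $B^{(k)}_j$ onto $B^{(\sigma(k))}_{\sigma(j)}$ preserving order. A $d$-ary cloning system consists of groups $(G_n)$, homomorphisms $\rho_n:G_n\to S_n$ and injective functions $\kappa_k^n:G_n\to G_{n+d-1}$ ($1\le k\le n$), written on the right with $(g)(\kappa\circ\kappa'):=((g)\kappa)\kappa'$, such that for $1\le k<\ell\le n$, $g,h\in G_n$: (C1) $(gh)\kappa_k^n=(g)\kappa^n_{\rho_n(h)k}(h)\kappa_k^n$;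 (C2) $\kappa_\ell^n\circ\kappa_k^{n+d-1}=\kappa_k^n\circ\kappa_{\ell+d-1}^{n+d-1}$; (C3) $\rho_{n+d-1}((g)\kappa_k^n)(i)=((\rho_n(g))\varsigma_k^n)(i)$ for $i\notin\{k,\dots,k+d-1\}$. $\mathscr{T}_d(G_* )$ is the group of classes $[T,g,U]$ ($T,U$ $d$-ary trees with $n$ leaves, $g\in G_n$) under the equivalence generated by $(T,g,U)\sim(T_{\rho_n(g)(k)},(g)\kappa_k^n,U_k)$, with product $[T,g,U][U,h,W]=[T,gh,W]$. We write $[T,U]=[T,1,U]$; these elements form the subgroup $F_d$ (the Higman–Thompson group). The system is diverse if some $n_0$ satisfies $\bigcap_{k=1}^n\mathrm{Im}\,\kappa_k^n=\{1\}$ for all $n\ge n_0$. *)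

From Stdlib Require Import Relations.Relation_Operators.
From HB Require Import structures.
From mathcomp Require Import all_boot all_order all_fingroup.
Set Implicit Arguments. Unset Strict Implicit. Unset Printing Implicit Defensive.

(* Conventions: leaves, carets positions, and the set {1,...,n} on which S_n
   acts are all 0-based: 'I_n = {0,...,n-1} (leaf k+1 of the paper = k). *)

Inductive dtree (d : nat) : Type :=
  | Leaf : dtree d
  | Node : {ffun 'I_d -> dtree d} -> dtree d.
Arguments Leaf {d}.

Fixpoint nleaves d (T : dtree d) : nat :=
  match T with
  | Leaf => 1
  | Node f => \sum_(i < d) nleaves (f i)
  end.

Fixpoint expand d (T : dtree d) (k : nat) : dtree d :=
  match T with
  | Leaf => Node [ffun _ : 'I_d => @Leaf d]
  | Node f =>
      Node [ffun i : 'I_d =>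
              let off := \sum_(j < d | j < i) nleaves (f j) in
              if (off <= k < off + nleaves (f i)) then expand (f i) (k - off)
              else f i]
  end.

Definition widen_by n m (k : 'I_n) : 'I_(n + m) := widen_ord (leq_addr m n) k.
Definition shift_by n m (l : 'I_n) : 'I_(n + m) :=
  @Ordinal (n + m) (l + m) (etrans (ltn_add2r m l n) (ltn_ord l)).

(** The standard cloning map (sigma) varsigma_k^n, as a function on 0-based
    positions of {0,...,n+d-2}: position i lies in block blk i (blocks
    B_j = {j} for j<k, B_k = {k,...,k+d-1}, B_j = {j+d-1} for j>k), and is
    sent order-preservingly onto block B^{(sigma k)}_{sigma j}. *)
Definition clone_blk d n (k : 'I_n) (i : nat) : nat :=
  if i < k then i else if i < k + d then nat_of_ord k else i - d.-1.

Definition clone_perm d n (sigma : 'I_n -> 'I_n) (k : 'I_n) (i : nat) : nat :=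
  let j : 'I_n := insubd k (clone_blk d k i) in
  if j == k then sigma k + (i - k)
  else if sigma j < sigma k then nat_of_ord (sigma j) else sigma j + d.-1.

(** S_n is {perm 'I_n}; rho_n is a homomorphism for
    the usual composition of maps (rho(gh) = rho(g) o rho(h)). *)
Record CloningSystem (d : nat) := {
  G : nat -> Type;
  gmul : forall n, G n -> G n -> G n;
  gone : forall n, G n;
  ginv : forall n, G n -> G n;
  gmulA : forall n (x y z : G n), gmul x (gmul y z) = gmul (gmul x y) z;
  gmul1g : forall n (x : G n), gmul (gone n) x = x;
  gmulg1 : forall n (x : G n), gmul x (gone n) = x;
  gmulVg : forall n (x : G n), gmul (ginv x) x = gone n;
  gmulgV : forall n (x : G n), gmul x (ginv x) = gone n;
  rho : forall n, G n -> {perm 'I_n};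
  rho_hom : forall n (g h : G n) (i : 'I_n), rho (gmul g h) i = rho g (rho h i);
  kappa : forall n, 'I_n -> G n -> G (n + d.-1);
  kappa_inj : forall n (k : 'I_n), injective (kappa k);
  clone_C1 : forall n (k : 'I_n) (g h : G n),
      kappa k (gmul g h) = gmul (kappa (rho h k) g) (kappa k h);
  clone_C2 : forall n (k l : 'I_n) (g : G n), k < l ->
      kappa (widen_by d.-1 k) (kappa l g) = kappa (shift_by d.-1 l) (kappa k g);
  clone_C3 : forall n (k : 'I_n) (g : G n) (i : 'I_(n + d.-1)),
      ~~ (k <= i < k + d) ->
      nat_of_ord (rho (kappa k g) i) = clone_perm d (rho g) k i
}.

Section Thompson.
Variables (d : nat) (C : CloningSystem d).

(** representatives (T, g, U) of elements of T_d(G_* ) *)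
Record trip := Trip { tn : nat; tT : dtree d; tg : G C tn; tU : dtree d }.

Definition valid (t : trip) : Prop := nleaves (tT t) = tn t /\ nleaves (tU t) = tn t.

Definition expand_step (t t' : trip) : Prop :=
  valid t /\
  exists k : 'I_(tn t),
    t' = @Trip (tn t + d.-1) (expand (tT t) (rho (tg t) k)) (kappa k (tg t))
               (expand (tU t) k).

Definition trip_equiv : trip -> trip -> Prop := clos_refl_sym_trans trip expand_step.

Definition TU (T U : dtree d) : trip := @Trip (nleaves T) T (gone C _) U.

Definition inF (x : trip) : Prop :=
  exists T U, nleaves T = nleaves U /\ trip_equiv x (TU T U).

Definition mulR (x y z : trip) : Prop :=
  exists n (T U W : dtree d) (g h : G C n),
    valid (Trip T g U) /\ valid (Trip U h W) /\
    trip_equiv x (Trip T g U) /\ trip_equiv y (Trip U h W) /\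
    trip_equiv z (Trip T (gmul g h) W).

Definition invR (x y : trip) : Prop :=
  exists n (T U : dtree d) (g : G C n),
    valid (Trip T g U) /\ trip_equiv x (Trip T g U) /\ trip_equiv y (Trip U (ginv g) T).

Definition conj_in_F (x : trip) (T U : dtree d) : Prop :=
  exists a b c, invR x a /\ mulR a (TU T U) b /\ mulR b x c /\ inF c.

End Thompson.

From HB Require Import structures.
From mathcomp Require Import all_boot all_order all_fingroup.
From mathcomp Require Import zify.
From Stdlib Require Import Relations.Relation_Operators.
Set Implicit Arguments. Unset Strict Implicit. Unset Printing Implicit Defensive.

(* A representative (T, g, U) can be expanded at any leaf of U, and expansions
   at distinct leaves commute by (C2) and (C3).  Hence expanding every leaf of
   depth < m in the right tree gives a normal form which, for m large, is the
   same for equivalent triples; as (C1) lets expansions pass through products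
   of triples with matching middle trees, the product of classes is
   well defined.

   Expand x to a representative (T, g, U) with n >= n0 leaves.  For leaves
   k, k', the conjugate x^-1 [T_(rho g k), T_(rho g k')] x is represented by
   (U_k, ((g)kappa_k)^-1 (g)kappa_k', U_k').  The label of every representative
   of an element of F_d is trivial, so all (g)kappa_k coincide; their common
   value lies in every Im kappa_k^n, hence is 1.  So g = 1 and x = [T, U]. *)

Lemma take_nth_drop (s : seq nat) k : k < size s ->
  s = take k s ++ nth 0 s k :: drop k.+1 s.
Proof. by move=> hk; rewrite -(drop_nth 0 hk) cat_take_drop. Qed.

Section DepthSequences.
Variable d : nat.
Hypothesis d_gt0 : 0 < d.

Definition expand_depths (s : seq nat) k :=
  take k s ++ nseq d (nth 0 s k).+1 ++ drop k.+1 s.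

Lemma size_expand_depths s k : k < size s -> size (expand_depths s k) = size s + d.-1.
Proof. by move=> hk; rewrite !size_cat size_take size_drop size_nseq hk; lia. Qed.

Lemma nth_expand_depths s j k : j < k -> k < size s ->
  nth 0 (expand_depths s j) (k + d.-1) = nth 0 s k.
Proof.
move=> hjk hk; rewrite nth_cat size_take (ltn_trans hjk hk) ifF; last by lia.
by rewrite nth_cat size_nseq ifF ?nth_drop; [congr nth|]; lia.
Qed.

Lemma expand_depths_catl s1 s2 k : k < size s1 ->
  expand_depths (s1 ++ s2) k = expand_depths s1 k ++ s2.
Proof.
move=> hk; rewrite /expand_depths take_cat nth_cat hk -!catA drop_cat.
case: ltnP => // hk1; have e : k.+1 = size s1 by apply/eqP; rewrite eqn_leq hk1 hk.
by rewrite e subnn drop0 drop_size.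
Qed.

Lemma expand_depths_catr s1 s2 k : size s1 <= k ->
  expand_depths (s1 ++ s2) k = s1 ++ expand_depths s2 (k - size s1).
Proof.
move=> hk; rewrite /expand_depths take_cat drop_cat nth_cat !ltnNge hk leqW //=.
by rewrite -catA subSn.
Qed.

Lemma map_succ_expand_depths s k : k < size s ->
  map S (expand_depths s k) = expand_depths (map S s) k.
Proof.
by move=> hk; rewrite /expand_depths !map_cat map_nseq map_take map_drop (nth_map 0).
Qed.

End DepthSequences.

Section MissingCarets.
Variables (d m : nat).
Hypothesis d_gt1 : 1 < d.

Definition shallow (e : nat) := e < m.

Definition bounded_depths (s : seq nat) := all (fun e => e <= m) s.

Definition missing_carets (s : seq nat) := sumn [seq (d ^ (m - e)).-1 | e <- s].

Lemma bounded_expand_depths s k : k < size s ->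
  bounded_depths (expand_depths d s k) = bounded_depths s && shallow (nth 0 s k).
Proof.
move=> hk; rewrite /bounded_depths /shallow {2}(take_nth_drop hk) !all_cat all_nseq /=.
have -> : (d == 0) = false by lia.
case: (all _ (take k s)); case: (all _ (drop k.+1 s)); rewrite /= ?andbT ?andbF //.
by apply/idP/idP => [h|/andP[]//]; rewrite h ltnW.
Qed.

Lemma find_shallow_le s k : k < size s -> shallow (nth 0 s k) -> find shallow s <= k.
Proof. by move=> hk hm; rewrite leqNgt; apply/negP => /(before_find 0); rewrite hm. Qed.

Lemma find_expand_depths s k : find shallow s < k -> k < size s ->
  find shallow (expand_depths d s k) = find shallow s.
Proof.
move=> hj hk; rewrite find_cat has_take_leq ?size_take ?hk ?(ltnW hk) // hj.
by rewrite -{2}(cat_take_drop k s) find_cat has_take_leq ?(ltnW hk) // hj.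
Qed.

Lemma has_expand_depths s k : find shallow s < k -> k < size s ->
  has shallow (expand_depths d s k).
Proof. by move=> hj hk; rewrite has_cat has_take_leq ?(ltnW hk) // hj. Qed.

(* Splitting a leaf of depth e < m into d leaves of depth e + 1 turns the
   summand d ^ (m - e) - 1 into d * (d ^ (m - e - 1) - 1), which is smaller. *)
Lemma missing_carets_expand s k : k < size s -> shallow (nth 0 s k) ->
  missing_carets (expand_depths d s k) < missing_carets s.
Proof.
move=> hk hm; rewrite {2}(take_nth_drop hk) /missing_carets !map_cat !sumn_cat /=.
rewrite map_nseq sumn_nseq.
have -> : m - nth 0 s k = (m - (nth 0 s k).+1).+1 by rewrite /shallow in hm; lia.
rewrite expnS.
have : 0 < d ^ (m - (nth 0 s k).+1) by rewrite expn_gt0; lia.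
move: (d ^ _) => X hX.
have : d <= d * X by rewrite leq_pmulr.
nia.
Qed.

Lemma missing_carets_gt0 s : has shallow s -> 0 < missing_carets s.
Proof.
elim: s => //= e s IH /orP [he|hs]; rewrite /missing_carets /=.
- have : 1 < d ^ (m - e) by rewrite -{1}(expn0 d) ltn_exp2l //; rewrite /shallow in he; lia.
  lia.
- by move: (IH hs); rewrite /missing_carets; lia.
Qed.

End MissingCarets.

Lemma bounded_depths_sumn s : bounded_depths (sumn s) s.
Proof.
elim: s => //= e s IH; rewrite leq_addr /=.
by apply: sub_all IH => x /= h; apply: leq_trans h (leq_addl _ _).
Qed.

Lemma bounded_depths_mono m m' s : m <= m' -> bounded_depths m s -> bounded_depths m' s.
Proof. by move=> h; apply: sub_all => x /= hx; apply: leq_trans hx h. Qed.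

Section Trees.
Variable d : nat.
Hypothesis d_gt0 : 0 < d.
Implicit Types (T : dtree d) (ts : seq (dtree d)).
Local Notation branching := {ffun 'I_d -> dtree d}.

(* The generated dtree_ind gives no hypothesis for the children in the finfun. *)
Definition dtree_nested_ind (P : dtree d -> Prop) (PLeaf : P Leaf)
    (PNode : forall f : branching, (forall i, P (f i)) -> P (Node f)) : forall T, P T :=
  fix IH T := match T with Leaf => PLeaf | Node f => PNode f (fun i => IH (f i)) end.

Definition children (f : branching) := [seq f i | i <- enum 'I_d].

Definition of_children ts : branching := [ffun i : 'I_d => nth Leaf ts i].

Lemma size_children (f : branching) : size (children f) = d.
Proof. by rewrite size_map size_enum_ord. Qed.

Lemma nth_children (f : branching) (i : 'I_d) : nth Leaf (children f) i = f i.
Proof. by rewrite (nth_map i) ?nth_ord_enum // size_enum_ord. Qed.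

Lemma children_of_children ts : size ts = d -> children (of_children ts) = ts.
Proof.
move=> hs; apply: (@eq_from_nth _ Leaf); rewrite size_children // => i hi.
by rewrite (nth_children _ (Ordinal hi)) ffunE.
Qed.

Lemma Forall_children (P : dtree d -> Prop) (f : branching) :
  (forall i, P (f i)) -> List.Forall P (children f).
Proof. by move=> h; rewrite /children; elim: (enum 'I_d) => //= i s IH; constructor. Qed.

Lemma sum_nth_take (s : seq nat) i : i <= size s ->
  \sum_(j < i) nth 0 s j = sumn (take i s).
Proof. by elim: s i => [|a s IH] [|i] //= hi; rewrite ?big_ord0 // big_ord_recl IH. Qed.

Lemma nleaves_Node (f : branching) : nleaves (Node f) = sumn (map (@nleaves d) (children f)).
Proof.
rewrite /= -[map _ _]take_size -sum_nth_take // size_map size_children.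
by apply: eq_bigr => i _; rewrite (nth_map Leaf) ?size_children // nth_children.
Qed.

Lemma nleaves_gt0 T : 0 < nleaves T.
Proof.
elim/dtree_nested_ind: T => [|f IH] //=.
by rewrite (bigD1 (Ordinal d_gt0)) //=; apply: leq_trans (IH _) (leq_addr _ _).
Qed.

Fixpoint expand_forest ts k : seq (dtree d) :=
  match ts with
  | [::] => [::]
  | c :: ts' => if k < nleaves c then expand c k :: ts'
                else c :: expand_forest ts' (k - nleaves c)
  end.

Lemma size_expand_forest ts k : size (expand_forest ts k) = size ts.
Proof. by elim: ts k => [|c ts IH] k //=; case: ifP => //= _; rewrite IH. Qed.

Lemma nth_expand_forest ts k i : i < size ts ->
  let o := sumn (take i (map (@nleaves d) ts)) in
  nth Leaf (expand_forest ts k) i =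
  if o <= k < o + nleaves (nth Leaf ts i) then expand (nth Leaf ts i) (k - o)
  else nth Leaf ts i.
Proof.
elim: ts k i => [|c ts IH] k [|i] //= hi.
- by rewrite add0n subn0; case: ifP.
- case: ifP => hk /=.
    by rewrite ifF //; apply/negbTE; rewrite negb_and -ltnNge ltn_addr.
  have hck : nleaves c <= k by rewrite leqNgt hk.
  by rewrite IH // -addnA leq_subRL // ltn_subLR // subnDA addnA.
Qed.

Lemma sum_nleaves_before (f : branching) (i : 'I_d) :
  \sum_(j < d | j < i) nleaves (f j) = sumn (take i (map (@nleaves d) (children f))).
Proof.
rewrite -sum_nth_take; last by rewrite size_map size_children ltnW.
rewrite (big_ord_widen d (fun j => nth 0 (map (@nleaves d) (children f)) j)) ?(ltnW (ltn_ord i)) //.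
by apply: eq_bigr => j _; rewrite (nth_map Leaf) ?size_children // nth_children.
Qed.

Lemma expand_Node (f : branching) k :
  expand (Node f) k = Node (of_children (expand_forest (children f) k)).
Proof.
congr Node; apply/ffunP => i; rewrite !ffunE nth_expand_forest ?size_children //.
by rewrite sum_nleaves_before nth_children.
Qed.

Fixpoint depths T : seq nat :=
  match T with
  | Leaf => [:: 0]
  | Node f => flatten [seq map S (depths (f i)) | i <- enum 'I_d]
  end.

Definition forest_depths ts := flatten [seq map S (depths c) | c <- ts].

Lemma depths_Node (f : branching) : depths (Node f) = forest_depths (children f).
Proof. by rewrite /= /forest_depths /children -map_comp. Qed.

Lemma size_depths T : size (depths T) = nleaves T.
Proof.
elim/dtree_nested_ind: T => [|f IH] //.
rewrite depths_Node nleaves_Node size_flatten /shape /children -!map_comp.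
by apply/congr1/eq_map => i /=; rewrite size_map IH.
Qed.

Definition depths_expand_spec T := forall k, k < nleaves T ->
  depths (expand T k) = expand_depths d (depths T) k.

Lemma forest_depths_expand ts k : List.Forall depths_expand_spec ts ->
  k < sumn (map (@nleaves d) ts) ->
  forest_depths (expand_forest ts k) = expand_depths d (forest_depths ts) k.
Proof.
elim: ts k => [|c ts IH] k // /List.Forall_cons_iff [hc hts] /= hlt.
have cons_depths c' ts' : forest_depths (c' :: ts') = map S (depths c') ++ forest_depths ts'.
  by [].
rewrite !cons_depths; case: ifP => hk; rewrite cons_depths.
- by rewrite expand_depths_catl ?size_map ?size_depths // hc // map_succ_expand_depths ?size_depths.
- have hck : nleaves c <= k by rewrite leqNgt hk.
  rewrite expand_depths_catr ?size_map ?size_depths // IH //.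
  by rewrite ltn_subLR.
Qed.

Lemma depths_expand T : depths_expand_spec T.
Proof.
elim/dtree_nested_ind: T => [|f IH] k.
- case: k => //= _; rewrite /expand_depths /= cats0.
  transitivity (nseq (size (enum 'I_d)) 1); last by rewrite size_enum_ord.
  by elim: (enum 'I_d) => //= i s ->; rewrite ffunE.
- move=> hk; rewrite expand_Node !depths_Node children_of_children; last first.
    by rewrite size_expand_forest size_children.
  by rewrite forest_depths_expand -?nleaves_Node //; apply: Forall_children.
Qed.

Lemma nleaves_expand T k : k < nleaves T -> nleaves (expand T k) = nleaves T + d.-1.
Proof.
move=> hk; rewrite -!size_depths depths_expand // size_expand_depths //.
by rewrite size_depths.
Qed.

Definition expandC_spec T := forall a b, a < b -> b < nleaves T ->
  expand (expand T a) (b + d.-1) = expand (expand T b) a.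

Lemma expand_forestC ts a b : List.Forall expandC_spec ts -> a < b ->
  b < sumn (map (@nleaves d) ts) ->
  expand_forest (expand_forest ts a) (b + d.-1) = expand_forest (expand_forest ts b) a.
Proof.
elim: ts a b => [|c ts IH] a b // /List.Forall_cons_iff [hc hts] hab /= hb.
have [hbc|hcb] := ltnP b (nleaves c); have [hac|hca] := ltnP a (nleaves c); try lia.
- rewrite /= !nleaves_expand // ifT; last by lia.
  by rewrite ifT ?hc //; lia.
- rewrite /= nleaves_expand // ifF ?hac; last by lia.
  by congr (_ :: expand_forest _ _); lia.
- rewrite /= ifF ?ifF; try lia.
  have -> : b + d.-1 - nleaves c = b - nleaves c + d.-1 by lia.
  by rewrite IH //; lia.
Qed.

Lemma expandC T : expandC_spec T.
Proof.
elim/dtree_nested_ind: T => [|f IH] a b hab hb.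
- by case: b hab hb => [|[]].
- rewrite !expand_Node !children_of_children ?size_expand_forest ?size_children //.
  by rewrite expand_forestC -?nleaves_Node //; exact: Forall_children.
Qed.

End Trees.

Section CloningGroup.
Variables (d : nat) (C : CloningSystem d).
Local Notation one n := (gone C n).

Lemma gmulKg n (x y : G C n) : gmul (ginv x) (gmul x y) = y.
Proof. by rewrite gmulA gmulVg gmul1g. Qed.

Lemma gmul_idem n (x : G C n) : gmul x x = x -> x = one n.
Proof. by move=> h; rewrite -(gmulVg x) -{3}h gmulKg. Qed.

Lemma ginv_unique n (a b : G C n) : gmul a b = one n -> a = ginv b.
Proof. by move=> h; rewrite -(gmulg1 a) -(gmulgV b) gmulA h gmul1g. Qed.

Lemma ginvK n (x : G C n) : ginv (ginv x) = x.
Proof. by apply/esym/ginv_unique; rewrite gmulgV. Qed.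

Lemma rho1 n (i : 'I_n) : rho (one n) i = i.
Proof.
have h := rho_hom (one n) (one n) i; rewrite gmul1g in h.
by apply: (@perm_inj _ (rho (one n))); rewrite -h.
Qed.

Lemma rhoK n (g : G C n) k : rho (ginv g) (rho g k) = k.
Proof. by rewrite -rho_hom gmulVg rho1. Qed.

Lemma rhoKV n (g : G C n) k : rho g (rho (ginv g) k) = k.
Proof. by rewrite -rho_hom gmulgV rho1. Qed.

Lemma kappa1 n (k : 'I_n) : kappa k (one n) = one (n + d.-1).
Proof.
apply: gmul_idem; have h := clone_C1 k (one n) (one n).
by rewrite gmul1g rho1 in h; rewrite -h.
Qed.

Lemma kappaV n (k : 'I_n) (g : G C n) : kappa (rho g k) (ginv g) = ginv (kappa k g).
Proof. by apply: ginv_unique; rewrite -clone_C1 gmulVg kappa1. Qed.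

Lemma kappa_eq1 n (k : 'I_n) (g : G C n) : kappa k g = one (n + d.-1) -> g = one n.
Proof. by move=> h; apply: (@kappa_inj _ C _ k); rewrite h kappa1. Qed.

Lemma rho_kappa_shift n (j k : 'I_n) (g : G C n) : j < k ->
  nat_of_ord (rho (kappa j g) (shift_by d.-1 k)) =
  if rho g k < rho g j then nat_of_ord (rho g k) else rho g k + d.-1.
Proof.
move=> hjk; rewrite clone_C3 /=; last by apply/negP => /andP [h1 h2]; lia.
rewrite /clone_perm /clone_blk.
have -> : (k + d.-1 < j) = false by lia.
have -> : (k + d.-1 < j + d) = false by lia.
rewrite addnK.
have -> : insubd j k = k by apply: val_inj; rewrite /= val_insubd ltn_ord.
by rewrite ifF //; apply/eqP => /(congr1 val) /=; lia.
Qed.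

Lemma rho_kappa_widen n (j k : 'I_n) (g : G C n) : j < k ->
  nat_of_ord (rho (kappa k g) (widen_by d.-1 j)) =
  if rho g j < rho g k then nat_of_ord (rho g j) else rho g j + d.-1.
Proof.
move=> hjk; rewrite clone_C3 /=; last by apply/negP => /andP [h1 h2]; lia.
rewrite /clone_perm /clone_blk /= hjk.
have -> : insubd k j = j by apply: val_inj; rewrite /= val_insubd ltn_ord.
by rewrite ifF //; apply/eqP => /(congr1 val) /=; lia.
Qed.

End CloningGroup.

Section Expansions.
Variables (d : nat) (C : CloningSystem d).
Hypothesis d_gt0 : 0 < d.
Implicit Types t y f z : trip C.

Lemma trip_equiv_refl t : trip_equiv t t.
Proof. exact: rst_refl. Qed.

Lemma trip_equiv_sym t t' : trip_equiv t t' -> trip_equiv t' t.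
Proof. exact: rst_sym. Qed.

Lemma trip_equiv_trans t2 t1 t3 : trip_equiv t1 t2 -> trip_equiv t2 t3 -> trip_equiv t1 t3.
Proof. exact: rst_trans. Qed.

Lemma expand_step_equiv t t' : expand_step t t' -> trip_equiv t t'.
Proof. exact: rst_step. Qed.

(* Nat-indexed so that positions can be shifted by d.-1; out-of-range
   positions leave the triple unchanged. *)
Definition expand_trip t (k : nat) : trip C :=
  let: Trip n T g U := t in
  match (insub k : option 'I_n) with
  | Some k' => @Trip _ C (n + d.-1) (expand T (rho g k')) (kappa k' g) (expand U k)
  | None => t
  end.

Arguments expand_trip : simpl never.

Lemma expand_tripE n T (g : G C n) U (k : 'I_n) :
  expand_trip (Trip T g U) k = @Trip _ C (n + d.-1) (expand T (rho g k)) (kappa k g) (expand U k).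
Proof. by rewrite /expand_trip valK. Qed.

Lemma valid_expand_trip t k : valid t -> k < tn t -> valid (expand_trip t k).
Proof.
case: t => n T g U [/= hT hU] hk.
by rewrite -[k]/(nat_of_ord (Ordinal hk)) expand_tripE; split; rewrite /= nleaves_expand ?hT ?hU.
Qed.

Lemma expand_stepP t t' :
  expand_step t t' <-> valid t /\ exists2 k, k < tn t & t' = expand_trip t k.
Proof.
split => [[hv [k ->]]|[hv [k hk ->]]]; split=> //.
- by exists k => //; case: t hv k => n T g U hv k /=; rewrite expand_tripE.
- exists (Ordinal hk); case: t hv hk => n T g U hv hk /=.
  by rewrite -[k]/(nat_of_ord (Ordinal hk)) expand_tripE.
Qed.

Lemma tn_expand_trip t k : k < tn t -> tn (expand_trip t k) = tn t + d.-1.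
Proof. by case: t => n T g U /= hk; rewrite -[k]/(nat_of_ord (Ordinal hk)) expand_tripE. Qed.

Lemma tU_expand_trip t k : k < tn t -> tU (expand_trip t k) = expand (tU t) k.
Proof. by case: t => n T g U /= hk; rewrite -[k]/(nat_of_ord (Ordinal hk)) expand_tripE. Qed.

Lemma size_depths_tU t : valid t -> size (depths (tU t)) = tn t.
Proof. by case=> _ hU; rewrite size_depths. Qed.

Lemma depths_expand_trip t k : valid t -> k < tn t ->
  depths (tU (expand_trip t k)) = expand_depths d (depths (tU t)) k.
Proof. by case=> _ hU hk; rewrite tU_expand_trip // depths_expand // hU. Qed.

(* Leaf k > j of the right tree sits at position k + d.-1 once leaf j has been
   expanded; the left trees are handled by (C2) and (C3). *)
Lemma expand_tripC t j k : valid t -> j < k -> k < tn t ->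
  expand_trip (expand_trip t j) (k + d.-1) = expand_trip (expand_trip t k) j.
Proof.
case: t => n T g U [/= hT hU] hjk hk.
have hj : j < n by apply: ltn_trans hk.
pose j' := Ordinal hj; pose k' := Ordinal hk.
have -> : expand_trip (expand_trip (Trip T g U) j) (k + d.-1) =
          expand_trip (expand_trip (Trip T g U) j') (shift_by d.-1 k') by [].
have -> : expand_trip (expand_trip (Trip T g U) k) j =
          expand_trip (expand_trip (Trip T g U) k') (widen_by d.-1 j') by [].
rewrite !expand_tripE (clone_C2 g (k := j') (l := k') hjk).
congr Trip; last by rewrite /= expandC // hU.
rewrite rho_kappa_shift // rho_kappa_widen //.
have hne : rho g j' != rho g k'.
  by rewrite (inj_eq perm_inj); apply/eqP => /(congr1 val) /=; lia.
have ha : (rho g j' : nat) < nleaves T by rewrite hT.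
have hb : (rho g k' : nat) < nleaves T by rewrite hT.
by case: (ltngtP (rho g j') (rho g k')) => h; [rewrite expandC|rewrite expandC|rewrite h].
Qed.

Definition inv_trip t : trip C := let: Trip n T g U := t in @Trip _ C n U (ginv g) T.

Arguments inv_trip : simpl never.

Lemma inv_tripK t : inv_trip (inv_trip t) = t.
Proof. by case: t => n T g U; rewrite /inv_trip ginvK. Qed.

Lemma tT_inv_trip t : tT (inv_trip t) = tU t.
Proof. by case: t. Qed.

Lemma tU_inv_trip t : tU (inv_trip t) = tT t.
Proof. by case: t. Qed.

Lemma valid_inv_trip t : valid (inv_trip t) <-> valid t.
Proof. by case: t => n T g U; rewrite /valid /=; split => -[]. Qed.

Lemma inv_expand_trip n T (g : G C n) U (k : 'I_n) :
  inv_trip (expand_trip (Trip T g U) k) = expand_trip (inv_trip (Trip T g U)) (rho g k).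
Proof. by rewrite /inv_trip !expand_tripE rhoK kappaV. Qed.

Lemma expand_step_inv t t' : expand_step t t' -> expand_step (inv_trip t) (inv_trip t').
Proof.
case/expand_stepP => hv [k hk ->]; apply/expand_stepP; split; first exact/valid_inv_trip.
case: t hv hk => n T g U hv /= hk; exists (rho g (Ordinal hk)) => //.
by rewrite -[k]/(nat_of_ord (Ordinal hk)) inv_expand_trip.
Qed.

Lemma trip_equiv_inv t t' : trip_equiv t t' -> trip_equiv (inv_trip t) (inv_trip t').
Proof.
elim=> {t t'} [t t' /expand_step_inv|t|t t' _|t t' t'' _ IH1 _ IH2].
- exact: rst_step.
- exact: rst_refl.
- exact: rst_sym.
- exact: rst_trans IH2.
Qed.

(* Leaf j of the left tree is expanded by the step at k := rho(g)^-1 j. *)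
Definition expand_trip_left t (j : nat) : trip C :=
  let: Trip n T g U := t in
  match (insub j : option 'I_n) with
  | Some j' => expand_trip t (rho (ginv g) j')
  | None => t
  end.

Arguments expand_trip_left : simpl never.

Lemma expand_trip_leftE n T (g : G C n) U (j : 'I_n) :
  expand_trip_left (Trip T g U) j = expand_trip (Trip T g U) (rho (ginv g) j).
Proof. by rewrite /expand_trip_left valK. Qed.

Lemma inv_expand_trip_left n T (g : G C n) U (j : 'I_n) :
  inv_trip (expand_trip_left (Trip T g U) j) = expand_trip (inv_trip (Trip T g U)) j.
Proof. by rewrite expand_trip_leftE inv_expand_trip rhoKV. Qed.

Definition expansions := clos_refl_trans_1n (trip C) (@expand_step d C).

Lemma expansions_equiv t t' : expansions t t' -> trip_equiv t t'.
Proof.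
elim=> {t t'} [t|t t1 t' /expand_step_equiv h _ IH]; first exact: trip_equiv_refl.
exact: trip_equiv_trans h IH.
Qed.

Lemma expansions_trans t1 t2 t3 : expansions t1 t2 -> expansions t2 t3 -> expansions t1 t3.
Proof. by elim=> {t1 t2} // t t1 t2 h _ IH /IH; apply: rt1n_trans. Qed.

Lemma Trip_inj n T T' (g g' : G C n) U U' :
  @Trip _ C n T g U = Trip T' g' U' -> [/\ T = T', g = g' & U = U'].
Proof.
case=> -> h ->; split => //.
exact: Eqdep_dec.inj_pair2_eq_dec PeanoNat.Nat.eq_dec _ _ _ _ h.
Qed.

Definition prod_trip y f z : Prop :=
  exists n P Q R (g h : G C n),
    [/\ y = Trip P g Q, f = Trip Q h R, z = Trip P (gmul g h) R, valid y & valid f].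

Lemma prod_trip_fun y f z z' : prod_trip y f z -> prod_trip y f z' -> z = z'.
Proof.
case=> n [P [Q [R [g [h [-> -> -> _ _]]]]]].
case=> n' [P' [Q' [R' [g' [h' [ey ef -> _ _]]]]]].
have en := congr1 (@tn d C) ey; rewrite /= in en; subst n'.
case/Trip_inj: ey => eP eg _; case/Trip_inj: ef => _ eh eR.
by rewrite eP eg eh eR.
Qed.

Lemma prod_trip_valid y f z : prod_trip y f z -> [/\ valid y, valid f & valid z].
Proof. by case=> n [P [Q [R [g [h [-> -> -> [hP hQ] [hQ' hR]]]]]]]; do !split. Qed.

Lemma prod_trip_mid y f z : prod_trip y f z -> tU y = tT f.
Proof. by case=> n [P [Q [R [g [h [-> -> _ _ _]]]]]]. Qed.

(* By (C1), expanding the middle tree in both factors expands the product. *)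
Lemma prod_trip_expand_left y f z j : prod_trip y f z -> j < tn f ->
  exists y' z', [/\ prod_trip y' (expand_trip_left f j) z', expand_step y y' & expand_step z z'].
Proof.
move=> hP; have [_ _ hz] := prod_trip_valid hP.
case: hP hz => n [P [Q [R [g [h [-> -> -> hy hf]]]]]] hz /= hj.
pose k := rho (ginv h) (Ordinal hj).
exists (expand_trip (Trip P g Q) (rho h k)), (expand_trip (Trip P (gmul g h) R) k).
split; last 2 first.
- by apply/expand_stepP; split => //; exists (rho h k).
- by apply/expand_stepP; split => //; exists k.
rewrite -[j]/(nat_of_ord (Ordinal hj)) expand_trip_leftE -/k.
have := valid_expand_trip hy (ltn_ord (rho h k)).
have := valid_expand_trip hf (ltn_ord k).
rewrite !expand_tripE => vf vy.
do 6 eexists; split; try reflexivity; try eassumption.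
by rewrite rho_hom clone_C1.
Qed.

End Expansions.

Section NormalForm.
Variables (d : nat) (C : CloningSystem d).
Hypothesis d_gt1 : 1 < d.
Let d_gt0 : 0 < d := ltnW d_gt1.
Variable m : nat.
Implicit Types t y f z : trip C.

Definition bounded t := bounded_depths m (depths (tU t)).

Definition defect t := missing_carets d m (depths (tU t)).

(* With enough fuel N, a bounded triple ends with the complete tree of depth m
   on the right. *)
Fixpoint complete N t : trip C :=
  if N is N'.+1 then
    if has (shallow m) (depths (tU t))
    then complete N' (expand_trip t (find (shallow m) (depths (tU t))))
    else t
  else t.

Definition normal t := complete (defect t) t.

Lemma find_shallow_lt t : valid t -> has (shallow m) (depths (tU t)) ->
  find (shallow m) (depths (tU t)) < tn t.
Proof. by move=> hv; rewrite has_find size_depths_tU. Qed.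

Lemma expand_trip_bounded t k : valid t -> k < tn t ->
  shallow m (nth 0 (depths (tU t)) k) -> bounded t ->
  [/\ valid (expand_trip t k), bounded (expand_trip t k) & defect (expand_trip t k) < defect t].
Proof.
move=> hv hk hm hb; have hks : k < size (depths (tU t)) by rewrite size_depths_tU.
split; first exact: valid_expand_trip.
- by rewrite /bounded depths_expand_trip // bounded_expand_depths // -/(bounded t) hb hm.
- by rewrite /defect depths_expand_trip // missing_carets_expand.
Qed.

Lemma expand_trip_bounded_inv t k : valid t -> k < tn t -> bounded (expand_trip t k) ->
  bounded t /\ shallow m (nth 0 (depths (tU t)) k).
Proof.
move=> hv hk; rewrite /bounded depths_expand_trip // bounded_expand_depths //.
  by case/andP.
by rewrite size_depths_tU.
Qed.

Lemma defect_gt0 t : has (shallow m) (depths (tU t)) -> 0 < defect t.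
Proof. exact: missing_carets_gt0. Qed.

Lemma complete_id N t : ~~ has (shallow m) (depths (tU t)) -> complete N t = t.
Proof. by case: N => [|N] //= h; rewrite (negbTE h). Qed.

Lemma complete_succ N t : valid t -> bounded t -> defect t <= N ->
  complete N.+1 t = complete N t.
Proof.
elim: N t => [|N IH] t hv hb hN.
  by rewrite complete_id //; apply/negP => /defect_gt0; lia.
rewrite [complete N.+2 t]/= [complete N.+1 t]/=; case: ifP => // hh.
have [v1 b1 lt1] := expand_trip_bounded hv (find_shallow_lt hv hh) (nth_find 0 hh) hb.
by apply: IH => //; lia.
Qed.

Lemma complete_stable N N' t : valid t -> bounded t -> defect t <= N -> N <= N' ->
  complete N' t = complete N t.
Proof.
move=> hv hb hN; elim: N' => [|N' IH]; first by rewrite leqn0 => /eqP ->.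
rewrite leq_eqVlt => /orP [/eqP -> //|h].
by rewrite complete_succ ?IH //; lia.
Qed.

(* Confluence: expanding any shallow leaf k first does not change the result,
   since it commutes with the expansion of the leftmost shallow leaf j < k. *)
Lemma complete_expand N t k : valid t -> bounded t -> k < tn t ->
  shallow m (nth 0 (depths (tU t)) k) -> defect t <= N ->
  complete N (expand_trip t k) = complete N t.
Proof.
elim: N t k => [|N IH] t k hv hb hk hm hN.
  have hh : has (shallow m) (depths (tU t)).
    by apply/hasP; exists (nth 0 (depths (tU t)) k) => //; rewrite mem_nth ?size_depths_tU.
  by move: (defect_gt0 hh); lia.
have hks : k < size (depths (tU t)) by rewrite size_depths_tU.
have hjk := find_shallow_le hks hm.
have hh : has (shallow m) (depths (tU t)) by rewrite has_find (leq_ltn_trans hjk).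
have [v1 b1 lt1] := expand_trip_bounded hv hk hm hb.
rewrite [complete N.+1 t]/= hh.
set j := find (shallow m) (depths (tU t)) in hjk *.
have [hjk'|hkj] := ltnP j k; last first.
  have -> : j = k by apply/eqP; rewrite eqn_leq hjk.
  by rewrite complete_succ //; lia.
have hj := find_shallow_lt hv hh.
have [v2 b2 lt2] := expand_trip_bounded hv hj (nth_find 0 hh) hb.
rewrite /= depths_expand_trip // has_expand_depths ?size_depths_tU //.
rewrite find_expand_depths ?size_depths_tU // -/j -expand_tripC //.
apply: IH => //; first by rewrite tn_expand_trip // ltn_add2r.
- by rewrite depths_expand_trip // nth_expand_depths // size_depths_tU.
- by move: lt2 hN; rewrite -/j; lia.
Qed.

Lemma normal_expand t k : valid t -> k < tn t -> bounded (expand_trip t k) ->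
  normal (expand_trip t k) = normal t.
Proof.
move=> hv hk /(expand_trip_bounded_inv hv hk) [hb hm].
have [v1 b1 lt1] := expand_trip_bounded hv hk hm hb.
rewrite /normal -(@complete_stable (defect (expand_trip t k)) (defect t)) //; last by lia.
by rewrite complete_expand.
Qed.

Lemma normal_expansions t t' : expansions t t' -> valid t -> bounded t' ->
  bounded t /\ normal t = normal t'.
Proof.
elim=> {t t'} [t|t t1 t' /expand_stepP [_ [k hk ->]] _ IH] hv hb //.
have [hb1 e1] := IH (valid_expand_trip d_gt0 hv hk) hb.
have [hb0 _] := expand_trip_bounded_inv hv hk hb1.
by rewrite -e1 normal_expand.
Qed.

Lemma complete_spec N t : valid t -> bounded t -> defect t <= N ->
  [/\ ~~ has (shallow m) (depths (tU (complete N t))), bounded (complete N t),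
      valid (complete N t) & expansions t (complete N t)].
Proof.
elim: N t => [|N IH] t hv hb hN.
  by split => //=; [apply/negP => /defect_gt0; lia|apply: rt1n_refl].
rewrite /=; case: ifP => hh; last by split; rewrite ?hh //; apply: rt1n_refl.
have hj := find_shallow_lt hv hh.
have [v1 b1 lt1] := expand_trip_bounded hv hj (nth_find 0 hh) hb.
have [h1 h2 h3 h4] := IH _ v1 b1 (ltnSE (leq_trans lt1 hN)).
split => //; apply: rt1n_trans h4.
by apply/expand_stepP; split => //; exists (find (shallow m) (depths (tU t))).
Qed.

(* inv_trip swaps the two trees, so this completes the left tree of f. *)
Lemma prod_trip_complete_left N y f z : prod_trip y f z ->
  exists y1 z1, [/\ prod_trip y1 (inv_trip (complete N (inv_trip f))) z1,
                    expansions y y1 & expansions z z1].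
Proof.
elim: N y f z => [|N IH] y f z hP.
  by exists y, z; rewrite /= inv_tripK; split => //; apply: rt1n_refl.
rewrite /= tU_inv_trip; case: ifP => hh; last first.
  by exists y, z; rewrite inv_tripK; split => //; apply: rt1n_refl.
have [_ hf _] := prod_trip_valid hP.
have hj : find (shallow m) (depths (tT f)) < tn f.
  by move: hh; rewrite has_find size_depths; case: hf => ->.
have [y' [z' [hP' sy sz]]] := prod_trip_expand_left d_gt0 hP hj.
have [y1 [z1 [hP1 sy1 sz1]]] := IH _ _ _ hP'.
exists y1, z1; split; [|exact: rt1n_trans sy sy1|exact: rt1n_trans sz sz1].
case: f hP hh hf hj hP' hP1 => n T g U _ _ _ hj _.
by rewrite -[find _ _]/(nat_of_ord (Ordinal hj)) -inv_expand_trip_left.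
Qed.

Lemma bounded_sumn t : sumn (depths (tU t)) <= m -> bounded t.
Proof. by move=> h; apply: bounded_depths_mono h (bounded_depths_sumn _). Qed.

Lemma prod_trip_normal y f z : prod_trip y f z -> sumn (depths (tU y)) <= m ->
  exists2 z1, prod_trip (normal y) (inv_trip (normal (inv_trip f))) z1 & expansions z z1.
Proof.
move=> hP hm; have [hy hf _] := prod_trip_valid hP.
have hfi : valid (inv_trip f) by apply/valid_inv_trip.
have hbf : bounded (inv_trip f) by apply: bounded_sumn; rewrite tU_inv_trip -(prod_trip_mid hP).
have [y1 [z1 [hP1 sy sz]]] := prod_trip_complete_left (defect (inv_trip f)) hP.
have [hcomplete hbc _ _] := complete_spec hfi hbf (leqnn _).
have hby1 : bounded y1 by rewrite /bounded (prod_trip_mid hP1) tT_inv_trip.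
have [_ ->] := normal_expansions sy hy hby1.
exists z1 => //; rewrite /normal complete_id //.
by rewrite (prod_trip_mid hP1) tT_inv_trip.
Qed.

End NormalForm.

Lemma normal_equiv d (C : CloningSystem d) (d_gt1 : 1 < d) (t t' : trip C) :
  trip_equiv t t' -> exists M, forall m, M <= m -> normal m t = normal m t'.
Proof.
elim=> {t t'} [t t' /expand_stepP [hv [k hk ->]]|t|t t' _ [M IH]|t t' t'' _ [M1 IH1] _ [M2 IH2]].
- exists (sumn (depths (tU (expand_trip t k)))) => m hm.
  by rewrite normal_expand //; apply: bounded_sumn.
- by exists 0.
- by exists M => m hm; rewrite IH.
- by exists (M1 + M2) => m hm; rewrite IH1 ?IH2 //; lia.
Qed.

Lemma prod_trip_equiv d (C : CloningSystem d) (d_gt1 : 1 < d) (y f z y' f' z' : trip C) :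
  prod_trip y f z -> prod_trip y' f' z' -> trip_equiv y y' -> trip_equiv f f' ->
  trip_equiv z z'.
Proof.
move=> hP hP' /(normal_equiv d_gt1) [M1 ey] /trip_equiv_inv /(normal_equiv d_gt1) [M2 ef].
pose m := M1 + M2 + sumn (depths (tU y)) + sumn (depths (tU y')).
have [z1 hz1 sz1] := @prod_trip_normal _ _ d_gt1 m _ _ _ hP (ltac:(lia)).
have [z2 hz2 sz2] := @prod_trip_normal _ _ d_gt1 m _ _ _ hP' (ltac:(lia)).
rewrite -ey -?ef in hz2; try lia.
rewrite (prod_trip_fun hz1 hz2) in sz1.
exact: trip_equiv_trans (expansions_equiv sz1) (trip_equiv_sym (expansions_equiv sz2)).
Qed.

Section Conjugation.
Variables (d : nat) (C : CloningSystem d).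
Hypothesis d_gt1 : 1 < d.
Let d_gt0 : 0 < d := ltnW d_gt1.
Implicit Types t x y f z : trip C.

Definition trivial_label t := tg t = gone C (tn t).

Lemma trivial_label_step t t' : expand_step t t' -> trivial_label t <-> trivial_label t'.
Proof.
case/expand_stepP => _ [k hk ->]; case: t hk => n T g U hk.
rewrite -[k]/(nat_of_ord (Ordinal hk)) expand_tripE /trivial_label /=.
by split => [->|/kappa_eq1 //]; exact: kappa1.
Qed.

Lemma trivial_label_equiv t t' : trip_equiv t t' -> trivial_label t <-> trivial_label t'.
Proof.
elim=> {t t'} [t t' /trivial_label_step //|t //|t t' _ IH|t t' t'' _ IH1 _ IH2].
- by rewrite IH.
- by rewrite IH1 IH2.
Qed.

Lemma inF_trivial_label t : inF t -> trivial_label t.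
Proof. by case=> T [U [_ /trivial_label_equiv ->]]. Qed.

Lemma prod_trip_intro n P Q R (g h : G C n) : valid (Trip P g Q) -> valid (Trip Q h R) ->
  prod_trip (Trip P g Q) (Trip Q h R) (Trip P (gmul g h) R).
Proof. by move=> hy hf; do 6 eexists. Qed.

Lemma invR_equiv x a : invR x a -> trip_equiv (inv_trip x) a.
Proof.
case=> n [T [U [g [_ [ex ea]]]]].
exact: trip_equiv_trans (trip_equiv_inv ex) (trip_equiv_sym ea).
Qed.

Lemma mulR_equiv y f z y' f' z' : mulR y f z -> prod_trip y' f' z' ->
  trip_equiv y y' -> trip_equiv f f' -> trip_equiv z z'.
Proof.
case=> n [P [Q [R [g [h [vy [vf [ey [ef ez]]]]]]]]] hP' eyy' eff'.
apply: trip_equiv_trans ez (prod_trip_equiv d_gt1 (prod_trip_intro vy vf) hP' _ _).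
- exact: trip_equiv_trans (trip_equiv_sym ey) eyy'.
- exact: trip_equiv_trans (trip_equiv_sym ef) eff'.
Qed.

Lemma exists_large_expansion N t : valid t ->
  exists t', [/\ expansions t t', valid t' & N <= tn t'].
Proof.
elim: N => [|N IH] hv; first by exists t; split => //; apply: rt1n_refl.
have [t' [st vt hN]] := IH hv.
have h0 : 0 < tn t' by case: vt => <- _; apply: nleaves_gt0.
exists (expand_trip t' 0); split.
- apply: expansions_trans st _; apply: rt1n_trans (rt1n_refl _ _ _).
  by apply/expand_stepP; split => //; exists 0.
- exact: valid_expand_trip.
- by rewrite tn_expand_trip //; lia.
Qed.

(* x^-1 [T_(rho g k), T_(rho g k')] x is represented by
   (U_k, (g)kappa_k^-1 (g)kappa_k', U_k'), whose label must then be trivial. *)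
Lemma conj_in_F_kappa x n T (g : G C n) U (k k' : 'I_n) :
  valid (Trip T g U) -> trip_equiv x (Trip T g U) ->
  conj_in_F x (expand T (rho g k)) (expand T (rho g k')) -> kappa k g = kappa k' g.
Proof.
move=> hv ex [a [b [c [ha [hab [hbc hc]]]]]]; have [/= hT hU] := hv.
have nT (j : 'I_n) : nleaves (expand T (rho g j)) = n + d.-1 by rewrite nleaves_expand // hT.
have nU (j : 'I_n) : nleaves (expand U j) = n + d.-1 by rewrite nleaves_expand // hU.
have ex_step (j : 'I_n) : trip_equiv x (expand_trip (Trip T g U) j).
  apply: trip_equiv_trans ex (expand_step_equiv _); apply/expand_stepP; split => //.
  by exists j.
have ea : trip_equiv (Trip (expand U k) (ginv (kappa k g)) (expand T (rho g k))) a.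
  have -> : Trip (expand U k) (ginv (kappa k g)) (expand T (rho g k)) =
            inv_trip (expand_trip (Trip T g U) k) by rewrite expand_tripE.
  exact: trip_equiv_trans (trip_equiv_sym (trip_equiv_inv (ex_step k))) (invR_equiv ha).
have eb : trip_equiv b (Trip (expand U k) (ginv (kappa k g)) (expand T (rho g k'))).
  rewrite -[X in Trip _ X _](gmulg1 (ginv (kappa k g))).
  apply: mulR_equiv hab (prod_trip_intro _ _) (trip_equiv_sym ea) _; try by split; rewrite /= ?nT ?nU.
  by rewrite /TU nT; apply: trip_equiv_refl.
have ec : trip_equiv c
    (Trip (expand U k) (gmul (ginv (kappa k g)) (kappa k' g)) (expand U k')).
  apply: mulR_equiv hbc (prod_trip_intro _ _) eb _; try by split; rewrite /= ?nT ?nU.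
  by rewrite -expand_tripE; apply: ex_step.
have := proj1 (trivial_label_equiv ec) (inF_trivial_label hc).
rewrite /trivial_label /= => h1.
by rewrite -(gmulg1 (kappa k g)) -h1 gmulA gmulgV gmul1g.
Qed.

End Conjugation.

Unset Implicit Arguments.

Theorem mainTheorem2 (d : nat) (hd : 2 <= d) (C : CloningSystem d) (n0 : nat)
  (hn0 : forall n : nat, n0 <= n -> 0 < n ->
         forall g : G C (n + d.-1), (forall k : 'I_n, exists h : G C n, kappa k h = g) ->
         g = gone C (n + d.-1))
  (x : trip C) (hx : valid x)
  (H : forall T U : dtree d, nleaves T = nleaves U -> n0 <= nleaves T ->
       conj_in_F x T U) :
  inF x.
Proof.
have [[n T g U] [sx vx hn]] := exists_large_expansion hd n0 hx.
have ex := expansions_equiv sx; have [/= hT hU] := vx.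
have nT (k : 'I_n) : nleaves (expand T (rho g k)) = n + d.-1.
  by rewrite nleaves_expand ?hT //; apply: ltnW.
have kappa_const (k k' : 'I_n) : kappa k g = kappa k' g.
  apply: (conj_in_F_kappa hd vx ex); apply: H; rewrite !nT //.
  exact: leq_trans hn (leq_addr _ _).
have n_gt0 : 0 < n by rewrite -hT nleaves_gt0 // ltnW.
have g1 : g = gone C n.
  apply: (kappa_eq1 (k := Ordinal n_gt0)); apply: (hn0 _ hn n_gt0) => k.
  by exists g; apply: kappa_const.
exists T, U; split; first by rewrite hT hU.
by rewrite /TU hT -g1.
Qed.
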